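(* Let $\Gamma$ be a distance-regular graph with diameter $D\ge3$ and valency $k$. Let $\theta,\theta'$ be real numbers other than $k$ that form a tight pair. Then $$\Bigl(\theta+\frac{k}{a_1+1}\Bigr)\Bigl(\theta'+\frac{k}{a_1+1}\Bigr)=-\frac{k a_1 b_1}{(a_1+1)^2}.$$
   Context: $\Gamma$ is a finite connected undirected graph without loops or multiple edges, distance-regular with diameter $D$, intersection numbers $a_i,b_i,c_i$ ($c_0=0$, $b_D=0$), valency $k$, $c_i+a_i+b_i=k$. For $\theta\in\mathbb{R}$ the pseudo cosine sequence for $\theta$ is the sequence of reals $\sigma_0,\dots,\sigma_D$ with $\sigma_0=1$ and $c_i\sigma_{i-1}+a_i\sigma_i+b_i\sigma_{i+1}=\theta\sigma_i$ for $0\le i\le D-1$. Pseudo cosine sequences $\sigma_i$, $\rho_i$ form a tight pair if $(\sigma_i\rho_i)_{i=0}^D$ is a pseudo cosine sequence; reals $\theta,\theta'$ form a tight pair if their pseudo cosine sequences do. *)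

From HB Require Import structures.
From mathcomp Require Import all_boot all_order all_algebra.
Set Implicit Arguments. Unset Strict Implicit. Unset Printing Implicit Defensive.
Import Order.TTheory GRing.Theory Num.Theory.

(* A simple graph: vertex set a finType T, adjacency e : rel T
   (assumed symmetric and irreflexive in [is_drg]). *)

Fixpoint within (T : finType) (e : rel T) (n : nat) (x y : T) : bool :=
  if n is n'.+1 then within e n' x y || [exists z, within e n' x z && e z y]
  else x == y.

(* path-length distance (for a connected graph every distance is < #|T|) *)
Definition dist (T : finType) (e : rel T) (x y : T) : nat :=
  find (fun n => within e n x y) (iota 0 #|T|.+1).

Definition diameter (T : finType) (e : rel T) : nat :=
  \max_(x : T) \max_(y : T) dist e x y.

Definition is_drg (T : finType) (e : rel T) (a b c : nat -> nat) : Prop :=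
  [/\ symmetric e, irreflexive e, (forall x y : T, connect e x y) &
   [/\
      (forall x y : T, 0 < dist e x y ->
         #|[set z | e y z & dist e x z == (dist e x y).-1]| = c (dist e x y)),
      (forall x y : T,
         #|[set z | e y z & dist e x z == dist e x y]| = a (dist e x y)),
      (forall x y : T,
         #|[set z | e y z & dist e x z == (dist e x y).+1]| = b (dist e x y))
    & c 0 = 0 /\ b (diameter e) = 0]].

Local Open Scope ring_scope.

(* sigma is the pseudo cosine sequence for theta (only sigma_0..sigma_D
   matter): sigma_0 = 1 and
   c_i sigma_{i-1} + a_i sigma_i + b_i sigma_{i+1} = theta sigma_i, 0<=i<=D-1.
   (For i = 0 the first term vanishes since c_0 = 0.) *)
Definition pseudo_cosine (R : realFieldType) (a b c : nat -> nat) (D : nat)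
  (theta : R) (sigma : nat -> R) : Prop :=
  sigma 0%N = 1 /\
  forall i : nat, (i < D)%N ->
    (c i)%:R * sigma i.-1 + (a i)%:R * sigma i + (b i)%:R * sigma i.+1
      = theta * sigma i.

Definition tight_pair_seq (R : realFieldType) (a b c : nat -> nat) (D : nat)
  (sigma rho : nat -> R) : Prop :=
  exists eta : R, pseudo_cosine a b c D eta (fun i => sigma i * rho i).

(* reals theta, theta' form a tight pair if their pseudo cosine sequences do
   (pseudo cosine sequences are unique since b_i <> 0 for i < D) *)
Definition tight_pair (R : realFieldType) (a b c : nat -> nat) (D : nat)
  (theta theta' : R) : Prop :=
  exists sigma rho : nat -> R,
    [/\ pseudo_cosine a b c D theta sigma, pseudo_cosine a b c D theta' rho
      & tight_pair_seq a b c D sigma rho].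

From mathcomp Require Import all_boot all_order all_algebra ring.
Import Order.TTheory GRing.Theory Num.Theory.

(* Only the first three terms of the pseudo cosine sequences matter.  With
   s = sigma_1, r = rho_1, the recurrences at i = 0, 1 give theta = k s and
   b_1 sigma_2 = k s^2 - a_1 s - 1 (similarly for rho), and the tightness of
   (sigma_i rho_i) gives b_1 (1 + a_1 s r) + (b_1 sigma_2)(b_1 rho_2) = b_1 k s^2 r^2.
   Substituting and using k = 1 + a_1 + b_1 turns the latter into
   (s - 1)(r - 1) [((a_1 + 1) theta + k)((a_1 + 1) theta' + k) + k a_1 b_1] = 0,
   and theta, theta' <> k rule out the first two factors. *)

Section Distance.
Context {T : finType} {e : rel T}.

Lemma dist_xx x : dist e x x = 0.
Proof. by rewrite /dist /= eqxx. Qed.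

Lemma dist_eq0 x y : (dist e x y == 0) = (x == y).
Proof. by rewrite /dist /=; case: (x == y). Qed.

Lemma within1 {x y} : e x y -> within e 1 x y.
Proof. by move=> exy; apply/orP; right; apply/existsP; exists x; rewrite eqxx. Qed.

Lemma dist_edge {x y} : x != y -> e x y -> dist e x y = 1.
Proof.
move=> /negbTE neq_xy exy; have : 0 < #|T| by apply/card_gt0P; exists x.
rewrite /dist; case: #|T| => [//|n] _; cbn [find iota].
by rewrite [within _ 0 _ _]/= neq_xy (within1 exy).
Qed.

Lemma dist_le2 {x y z} : x != y -> e x y -> e y z -> dist e x z <= 2.
Proof.
move=> neq_xy exy eyz; have : 1 < #|T| by rewrite (cardD1 x) (cardD1 y) !inE eq_sym neq_xy.
have within2 : within e 2 x z.
  by apply/orP; right; apply/existsP; exists y; rewrite eyz andbT; exact: within1.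
rewrite /dist; case: #|T| => [//|[//|n]] _; cbn [find iota]; rewrite within2.
by case: (within e 0 x z); case: (within e 1 x z).
Qed.

Lemma exists_edge : (forall x y, connect e x y) -> 0 < diameter e ->
  exists x y, e x y.
Proof.
move=> conn diam_gt0.
have /existsP [x /existsP [y dxy]] : [exists x, exists y, 0 < dist e x y].
  apply: contraLR diam_gt0 => /existsPn no_pos; rewrite -leqNgt /diameter.
  apply/bigmax_leqP => x _; apply/bigmax_leqP => y _.
  by move/existsPn: (no_pos x) => /(_ y); rewrite -leqNgt.
have neq_xy : x != y by rewrite -dist_eq0 -lt0n.
case/connectP: (conn x y) => -[/= _ eq_yx|z p /= /andP [exz _] _]; last by exists x, z.
by rewrite eq_yx eqxx in neq_xy.
Qed.
End Distance.

Lemma card_set_sum_nat (T : finType) (P : pred T) : #|[set x | P x]| = \sum_x P x.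
Proof. by rewrite -sum1dep_card big_mkcond; apply: eq_bigr => x _; case: (P x). Qed.

Section DistanceRegular.
Context {T : finType} {e : rel T} {a b c : nat -> nat}.
Hypothesis drg : is_drg e a b c.

Lemma drg_card_neighbours z : #|[set w | e z w]| = b 0.
Proof.
case: drg => _ irr_e _ [_ _ Hb _]; have := Hb z z; rewrite dist_xx => <-.
apply: eq_card => w; rewrite !inE; case ezw: (e z w) => //=.
by rewrite dist_edge //; apply: contraTneq ezw => <-; rewrite irr_e.
Qed.

Lemma drg_a0 (x : T) : a 0 = 0.
Proof.
case: drg => _ irr_e _ [_ Ha _ _]; have := Ha x x; rewrite dist_xx => <-.
apply: eq_card0 => w; rewrite !inE dist_eq0.
by apply/negbTE/andP => -[exw /eqP eq_xw]; rewrite -eq_xw irr_e in exw.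
Qed.

Context {x y : T}.
Hypothesis exy : e x y.

Let neq_xy : x != y.
Proof. by case: drg => _ irr_e _ _; apply: contraTneq exy => <-; rewrite irr_e. Qed.

Let dist_xy : dist e x y = 1.
Proof. exact: dist_edge. Qed.

Lemma drg_c1 : c 1 = 1.
Proof.
case: drg => sym_e _ _ [Hc _ _ _]; have := Hc x y; rewrite dist_xy => <- //.
rewrite /= -(cards1 x); apply: eq_card => w; rewrite !inE dist_eq0 eq_sym.
by case: eqP => [->|_]; rewrite ?andbF // andbT sym_e.
Qed.

Lemma drg_valency : b 0 = c 1 + a 1 + b 1.
Proof.
case: drg => _ _ _ [Hc Ha Hb _].
have := Hc x y; have := Ha x y; have := Hb x y; rewrite dist_xy => <- <- <- //=.
rewrite -(drg_card_neighbours y) !card_set_sum_nat -!big_split; apply: eq_bigr => w _ /=.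
case eyw: (e y w) => //=; have := dist_le2 neq_xy exy eyw.
by case: (dist e x w) => [|[|[|n]]].
Qed.

End DistanceRegular.

Local Open Scope ring_scope.

Lemma pseudo_cosine_first_terms {R : realFieldType} {a b c : nat -> nat} {D : nat}
    {theta : R} {sigma : nat -> R} :
  a 0%N = 0%N -> c 0%N = 0%N -> c 1%N = 1%N -> (1 < D)%N ->
  pseudo_cosine a b c D theta sigma ->
  theta = (b 0%N)%:R * sigma 1%N /\
  1 + (a 1%N)%:R * sigma 1%N + (b 1%N)%:R * sigma 2%N = theta * sigma 1%N.
Proof.
move=> a0 c0 c1 D_gt1 [sigma0 rec]; split.
  by have := rec 0%N (ltnW D_gt1); rewrite a0 c0 sigma0 /= !mul0r !add0r mulr1.
by have := rec 1%N D_gt1; rewrite c1 sigma0 /= mul1r.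
Qed.

Lemma tight_pair_relation {R : idomainType} {k A B theta theta' eta s1 s2 r1 r2 : R} :
  k = 1 + A + B ->
  theta = k * s1 -> 1 + A * s1 + B * s2 = theta * s1 ->
  theta' = k * r1 -> 1 + A * r1 + B * r2 = theta' * r1 ->
  eta = k * (s1 * r1) -> 1 + A * (s1 * r1) + B * (s2 * r2) = eta * (s1 * r1) ->
  theta != k -> theta' != k ->
  ((A + 1) * theta + k) * ((A + 1) * theta' + k) = - (k * A * B).
Proof.
move=> kE th s_rec th' r_rec eta_def t_rec th_neq th'_neq.
have s1_neq1 : s1 - 1 != 0.
  by rewrite subr_eq0; apply: contraNneq th_neq => s1E; rewrite th s1E mulr1.
have r1_neq1 : r1 - 1 != 0.
  by rewrite subr_eq0; apply: contraNneq th'_neq => r1E; rewrite th' r1E mulr1.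
have Bs2 : B * s2 = theta * s1 - A * s1 - 1 by rewrite -s_rec; ring.
have Br2 : B * r2 = theta' * r1 - A * r1 - 1 by rewrite -r_rec; ring.
have tight_eq : B * (1 + A * (s1 * r1)) + (B * s2) * (B * r2) - B * (eta * (s1 * r1)) = 0.
  by rewrite -t_rec; ring.
rewrite Bs2 Br2 eta_def th th' kE in tight_eq.
have : (s1 - 1) * (r1 - 1) * (((A + 1) * theta + k) * ((A + 1) * theta' + k) + k * A * B) = 0.
  by rewrite -(mulr0 ((A + 1) * (1 + A + B))) -tight_eq th th' kE; ring.
by move/eqP; rewrite !mulf_eq0 (negbTE s1_neq1) (negbTE r1_neq1) addr_eq0 => /eqP.
Qed.

Theorem lemma4p4 (T : finType) (e : rel T) (a b c : nat -> nat)
  (R : realFieldType) (theta theta' : R) :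
  is_drg e a b c ->
  (3 <= diameter e)%N ->
  theta != (b 0%N)%:R -> theta' != (b 0%N)%:R ->
  tight_pair a b c (diameter e) theta theta' ->
  (theta + (b 0%N)%:R / ((a 1%N)%:R + 1)) * (theta' + (b 0%N)%:R / ((a 1%N)%:R + 1))
    = - ((b 0%N)%:R * (a 1%N)%:R * (b 1%N)%:R) / ((a 1%N)%:R + 1) ^+ 2.
Proof.
move=> drg D_ge3 th_neq th'_neq [sigma [rho [pc_sigma pc_rho [eta pc_prod]]]].
have [_ _ conn [_ _ _ [c0 _]]] := drg.
have D_gt1 : (1 < diameter e)%N := ltnW D_ge3.
have [x [y exy]] := exists_edge conn (ltnW D_gt1).
have a0 := drg_a0 drg x; have c1 := drg_c1 drg exy.
have kE : (b 0%N)%:R = 1 + (a 1%N)%:R + (b 1%N)%:R :> R.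
  by rewrite (drg_valency drg exy) c1 !natrD.
have [th s_rec] := pseudo_cosine_first_terms a0 c0 c1 D_gt1 pc_sigma.
have [th' r_rec] := pseudo_cosine_first_terms a0 c0 c1 D_gt1 pc_rho.
have [eta_def t_rec] := pseudo_cosine_first_terms a0 c0 c1 D_gt1 pc_prod.
have A1_neq0 : (a 1%N)%:R + 1 != 0 :> R by rewrite natr1 pnatr_eq0.
rewrite -(tight_pair_relation kE th s_rec th' r_rec eta_def t_rec th_neq th'_neq).
by field.
Qed.
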